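(* Under the setting and with the A-CODER iterates described in the context, for every $k\ge1$ and every $u\in\mathbb{R}^d$, $$E_k(u)\le a_k\langle\nabla f(x_k)-p_k,v_k-u\rangle-a_{k-1}\langle\nabla f(x_{k-1})-p_{k-1},v_{k-1}-u\rangle-\frac{1+A_{k-1}\gamma}{10}\|v_k-v_{k-1}\|^2+\frac{1+A_{k-2}\gamma}{10}\|v_{k-1}-v_{k-2}\|^2,$$ where $E_k(u)=A_k(f(y_k)-f(x_k))-A_{k-1}(f(y_{k-1})-f(x_k))-a_k\langle q_k,v_k-x_k\rangle+a_k\langle\nabla f(x_k)-q_k,x_k-u\rangle-\frac{1+A_{k-1}\gamma}{2}\|v_k-v_{k-1}\|^2$ (with the convention $A_{-1}=0$).
   Context: Setting. Problem $\min_{x\in\mathbb{R}^d}\bar f(x)=f(x)+g(x)$. Coordinates $\{1,\dots,d\}$ are partitioned into $m$ consecutive blocks $\mathcal{S}^1,\dots,\mathcal{S}^m$; $x^{(j)}$ is the block-$j$ subvector of $x$ and $\nabla^{(j)}f$ the block-$j$ part of $\nabla f$. $f$ is convex and continuously differentiable. $g(x)=\sum_{j=1}^m g^j(x^{(j)})$ is proper, lower semicontinuous, and $\gamma$-strongly convex with $\gamma\ge0$. $\mathrm{prox}_{\tau h}(w)=\arg\min_x\{\tau h(x)+\frac12\|x-w\|^2\}$. Block Lipschitz assumption: there are PSD matrices $Q^1,\dots,Q^m$ with $\|\nabla^{(j)}f(x)-\nabla^{(j)}f(y)\|^2\le(x-y)^\top Q^j(x-y)$ for all $x,y$ and $j$.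 For a $d\times d$ matrix $Q$, $(Q)_{\ge j}$ zeroes all rows and columns indexed by blocks $1,\dots,j-1$. $\tilde Q=\sum_{j=1}^m[(Q^j)_{\ge j}+(Q^j)_{\ge j+1}]$, $L>0$ with $L^2=2\|\tilde Q\|<\infty$. A-CODER iterates. Given $x_0\in\mathrm{dom}(g)$: set $x_{-1}=x_0=v_{-1}=v_0=y_0$, $p_0=\nabla f(x_0)$, $z_0=0$, $a_0=A_0=0$. For $k=1,2,\dots$: let $a_k>0$ be the largest value with $\frac{a_k^2}{A_k}\le\frac{2(1+A_{k-1}\gamma)}{5L}$ where $A_k=A_{k-1}+a_k$; set $x_k=\frac{A_{k-1}}{A_k}y_{k-1}+\frac{a_k}{A_k}v_{k-1}$; then for $j=m,m-1,\dots,1$ (in this order): $p_k^{(j)}=\nabla^{(j)}f(x_k^{(1)},\dots,x_k^{(j)},y_k^{(j+1)},\dots,y_k^{(m)})$; $q_k^{(j)}=p_k^{(j)}+\frac{a_{k-1}}{a_k}(\nabla^{(j)}f(x_{k-1})-p_{k-1}^{(j)})$; $z_k^{(j)}=z_{k-1}^{(j)}+a_kq_k^{(j)}$; $v_k^{(j)}=\mathrm{prox}_{A_kg^j}(x_0^{(j)}-z_k^{(j)})$; $y_k^{(j)}=\frac{A_{k-1}}{A_k}y_{k-1}^{(j)}+\frac{a_k}{A_k}v_k^{(j)}$. Here $p_k=(p_k^{(1)},\dots,p_k^{(m)})$, $q_k$, $v_k$, $y_k$ are assembled from their blocks. *)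

From HB Require Import structures.
From mathcomp Require Import all_boot all_order all_algebra.
From mathcomp Require Import all_classical all_reals all_analysis.
Set Implicit Arguments. Unset Strict Implicit. Unset Printing Implicit Defensive.
Import Order.TTheory GRing.Theory Num.Theory.
Import numFieldNormedType.Exports.
Local Open Scope ring_scope.

Section Defs.
Variables (R : realType) (d m : nat).

Definition dotp (u v : 'rV[R]_d) : R := \sum_(i < d) u ord0 i * v ord0 i.
Definition sqnorm (u : 'rV[R]_d) : R := dotp u u.
Definition enorm (u : 'rV[R]_d) : R := Num.sqrt (sqnorm u).

Definition quadf (Q : 'M[R]_d) (u : 'rV[R]_d) : R := (u *m Q *m u^T) ord0 ord0.
Definition psd (Q : 'M[R]_d) : Prop := Q^T = Q /\ forall u, 0 <= quadf Q u.

Definition opnorm2 (Q : 'M[R]_d) : R :=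
  sup [set r : R | exists u : 'rV[R]_d, sqnorm u = 1 /\ r = enorm (Q *m u^T)^T].

(* partition of coordinates into m consecutive (nonempty) blocks:
   blk i = index (0-based) of the block containing coordinate i *)
Definition consecutive_blocks (blk : 'I_d -> 'I_m) : Prop :=
  (forall i i' : 'I_d, (i <= i')%N -> (blk i <= blk i')%N) /\
  (forall j : 'I_m, exists i, blk i = j).

Definition bmask (blk : 'I_d -> 'I_m) (j : 'I_m) (u : 'rV[R]_d) : 'rV[R]_d :=
  \row_i (if blk i == j then u ord0 i else 0).

(* (x^(1),...,x^(j), y^(j+1),...,y^(m)) *)
Definition mixv (blk : 'I_d -> 'I_m) (j : 'I_m) (x y : 'rV[R]_d) : 'rV[R]_d :=
  \row_i (if (blk i <= j)%N then x ord0 i else y ord0 i).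

(* (Q)_{>= j} with 0-based block index j (nat, so j = m gives the zero matrix) *)
Definition trunc_ge (blk : 'I_d -> 'I_m) (j : nat) (Q : 'M[R]_d) : 'M[R]_d :=
  \matrix_(r, c) (if (j <= blk r)%N && (j <= blk c)%N then Q r c else 0).

Definition Qtilde (blk : 'I_d -> 'I_m) (Q : 'I_m -> 'M[R]_d) : 'M[R]_d :=
  \sum_(j < m) (trunc_ge blk j (Q j) + trunc_ge blk j.+1 (Q j)).

Definition depends_only_on_block (blk : 'I_d -> 'I_m) (j : 'I_m)
  (h : 'rV[R]_d -> \bar R) : Prop :=
  forall x y : 'rV[R]_d, (forall i, blk i = j -> x ord0 i = y ord0 i) -> h x = h y.

Definition convex_fun (f : 'rV[R]_d -> R) : Prop :=
  forall (x y : 'rV[R]_d) (t : R), 0 <= t <= 1 ->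
    f (t *: x + (1 - t) *: y) <= t * f x + (1 - t) * f y.

Definition proper_fun (g : 'rV[R]_d -> \bar R) : Prop :=
  (forall x, g x != -oo%E) /\ (exists x, (g x < +oo)%E).

Definition strongly_convex (gamma : R) (g : 'rV[R]_d -> \bar R) : Prop :=
  forall (x y : 'rV[R]_d) (t : R), 0 < t < 1 ->
    (g (t *: x + (1 - t) *: y)%R <=
     t%:E * g x + (1 - t)%:E * g y - (gamma / 2 * t * (1 - t) * sqnorm (x - y))%:E)%E.

End Defs.

From HB Require Import structures.
From mathcomp Require Import all_boot all_order all_algebra.
From mathcomp Require Import all_classical all_reals all_analysis.
From mathcomp Require Import ring lra.
Import Order.TTheory GRing.Theory Num.Theory.
Import numFieldNormedType.Exports.
Local Open Scope ring_scope.
Set Implicit Arguments. Unset Strict Implicit. Unset Printing Implicit Defensive.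

(* With G = grad f(x_k), c_k = 1 + A_{k-1} gamma
   and s_k = |v_k - v_{k-1}|^2, the inequality is a linear combination of
   (1) the gradient inequality of the convex f at x_k, using the coupling
       identity A_{k-1}(y_{k-1} - x_k) = a_k (x_k - v_{k-1});
   (2) the descent inequality f y <= f x + <grad f x, y - x> + L/2 |y - x|^2 at
       (x_k, y_k), using y_k - x_k = (a_k/A_k)(v_k - v_{k-1}) and the step-size
       rule a_k^2/A_k <= 2 c_k/(5L);
   (3) the extrapolation identity a_k q_k = a_k p_k + a_{k-1}(grad f(x_{k-1}) - p_{k-1}),
       the bound |grad f(x) - p|^2 <= L^2/2 |x - y|^2 on the error of the cyclic
       (Gauss-Seidel) gradient p, and Young's inequality.
   The descent inequality and the cyclic-gradient bound both follow from the
   block Lipschitz condition, because the quadratic form of Qtilde, bounded by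
   |Qtilde| |u|^2, is the sum over blocks of the forms of (Q^j)_{>=j} and
   (Q^j)_{>=j+1}.  The descent inequality is proved along the path from y to x
   that switches one block at a time; on each segment the gradient inequality is
   "integrated" by a Riemann-sum argument, so no integration theory is needed. *)

Section InnerProduct.
Variables (R : realType) (d : nat).
Implicit Types (u w h : 'rV[R]_d).

Lemma dotpC u w : dotp u w = dotp w u.
Proof. by apply: eq_bigr => i _; rewrite mulrC. Qed.

Lemma dotpDl u h w : dotp (u + h) w = dotp u w + dotp h w.
Proof. by rewrite /dotp -big_split; apply: eq_bigr => i _; rewrite mxE mulrDl. Qed.

Lemma dotpZl (c : R) u w : dotp (c *: u) w = c * dotp u w.
Proof. by rewrite /dotp mulr_sumr; apply: eq_bigr => i _; rewrite mxE mulrA. Qed.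

Lemma dotpNl u w : dotp (- u) w = - dotp u w.
Proof. by rewrite -scaleN1r dotpZl mulN1r. Qed.

Lemma dotpBl u h w : dotp (u - h) w = dotp u w - dotp h w.
Proof. by rewrite dotpDl dotpNl. Qed.

Lemma dotpDr u h w : dotp w (u + h) = dotp w u + dotp w h.
Proof. by rewrite dotpC dotpDl !(dotpC w). Qed.

Lemma dotpZr (c : R) u w : dotp w (c *: u) = c * dotp w u.
Proof. by rewrite dotpC dotpZl dotpC. Qed.

Lemma dotpNr u w : dotp w (- u) = - dotp w u.
Proof. by rewrite dotpC dotpNl dotpC. Qed.

Lemma dotpBr u h w : dotp w (u - h) = dotp w u - dotp w h.
Proof. by rewrite dotpDr dotpNr. Qed.

Lemma sqnorm_ge0 u : 0 <= sqnorm u.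
Proof. by apply: sumr_ge0 => i _; rewrite -expr2 sqr_ge0. Qed.

Lemma sqnormZ (c : R) u : sqnorm (c *: u) = c ^+ 2 * sqnorm u.
Proof. by rewrite /sqnorm dotpZl dotpZr mulrA -expr2. Qed.

Lemma sqnormN u : sqnorm (- u) = sqnorm u.
Proof. by rewrite /sqnorm dotpNl dotpNr opprK. Qed.

Lemma sqnormB u w : sqnorm (u - w) = sqnorm u - 2 * dotp u w + sqnorm w.
Proof. by rewrite /sqnorm dotpBl !dotpBr (dotpC w u); ring. Qed.

(* Young's inequality <u, w> <= |u|^2/(2s) + s|w|^2/2, from |u - s w|^2 >= 0. *)
Lemma young s u w : 0 < s -> dotp u w <= sqnorm u / (2 * s) + s * sqnorm w / 2.
Proof.
move=> s0; have := sqnorm_ge0 (u - s *: w).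
rewrite sqnormB sqnormZ dotpZr => H.
have -> : sqnorm u / (2 * s) + s * sqnorm w / 2 =
   dotp u w + (sqnorm u - 2 * (s * dotp u w) + s ^+ 2 * sqnorm w) / (2 * s).
  by field; rewrite gt_eqF.
by rewrite lerDl divr_ge0 // mulr_ge0 // ltW.
Qed.

Lemma sqnorm_eq0 u : sqnorm u = 0 -> u = 0.
Proof.
move=> /eqP; rewrite psumr_eq0 => [/allP H|i _]; last by rewrite -expr2 sqr_ge0.
apply/rowP => i; rewrite !mxE; have := H i (mem_index_enum _).
by rewrite /= mulf_eq0 orbb => /eqP.
Qed.

End InnerProduct.

Section Blocks.
Variables (R : realType) (d m : nat) (blk : 'I_d -> 'I_m).
Implicit Types (u w h : 'rV[R]_d).

Definition tmask (n : nat) u : 'rV[R]_d :=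
  \row_i (if (n <= blk i)%N then u ord0 i else 0).

Lemma quadfE (Q : 'M[R]_d) u :
  quadf Q u = \sum_i \sum_j u ord0 i * Q i j * u ord0 j.
Proof.
rewrite /quadf mxE (eq_bigr (fun i => \sum_k u ord0 k * Q k i * u ord0 i)).
  by rewrite exchange_big.
by move=> i _; rewrite !mxE mulr_suml; apply: eq_bigr.
Qed.

Lemma quadfD (Q1 Q2 : 'M[R]_d) u : quadf (Q1 + Q2) u = quadf Q1 u + quadf Q2 u.
Proof.
rewrite !quadfE -big_split; apply: eq_bigr => i _; rewrite -big_split.
by apply: eq_bigr => j _; rewrite !mxE /=; ring.
Qed.

Lemma quadf0 u : quadf 0 u = 0.
Proof.
by rewrite quadfE big1 // => i _; rewrite big1 // => j _; rewrite mxE mulr0 mul0r.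
Qed.

Lemma quadf_sum (I : finType) (F : I -> 'M[R]_d) u :
  quadf (\sum_i F i) u = \sum_i quadf (F i) u.
Proof.
apply: (big_ind2 (fun M r => quadf M u = r)) => //; first exact: quadf0.
by move=> M1 r1 M2 r2 <- <-; rewrite quadfD.
Qed.

Lemma quadf_trunc n (Q : 'M[R]_d) u :
  quadf (trunc_ge blk n Q) u = quadf Q (tmask n u).
Proof.
rewrite !quadfE; apply: eq_bigr => i _; apply: eq_bigr => j _; rewrite !mxE.
by case: (n <= blk i)%N; case: (n <= blk j)%N; rewrite ?mulr0 ?mul0r.
Qed.

Lemma quadf_Qtilde (Q : 'I_m -> 'M[R]_d) u :
  quadf (Qtilde blk Q) u =
  \sum_(j < m) (quadf (Q j) (tmask j u) + quadf (Q j) (tmask j.+1 u)).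
Proof.
rewrite /Qtilde quadf_sum; apply: eq_bigr => j _.
by rewrite quadfD !quadf_trunc.
Qed.

Lemma quadf_convex (Q : 'M[R]_d) (t : R) u w : psd Q -> 0 <= t <= 1 ->
  quadf Q ((1 - t) *: u + t *: w) <= (1 - t) * quadf Q u + t * quadf Q w.
Proof.
move=> [_ Qp] /andP[t0 t1].
have E : (1 - t) * quadf Q u + t * quadf Q w - quadf Q ((1 - t) *: u + t *: w)
   = t * (1 - t) * quadf Q (u - w).
  rewrite !quadfE !mulr_sumr -!big_split -sumrB; apply: eq_bigr => i _.
  rewrite !mulr_sumr -!big_split -sumrB; apply: eq_bigr => j _; rewrite !mxE /=.
  ring.
by rewrite -subr_ge0 E mulr_ge0 ?Qp // mulr_ge0 // subr_ge0.
Qed.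

Lemma bmaskK j u : bmask blk j (bmask blk j u) = bmask blk j u.
Proof. by apply/rowP => i; rewrite !mxE; case: (blk i == j). Qed.

Lemma dotp_bmask j u w : dotp u (bmask blk j w) = dotp (bmask blk j u) w.
Proof.
by apply: eq_bigr => i _; rewrite !mxE; case: (blk i == j); rewrite ?mulr0 ?mul0r.
Qed.

Lemma dotp_part u w : \sum_(j < m) dotp u (bmask blk j w) = dotp u w.
Proof.
rewrite /dotp exchange_big /=; apply: eq_bigr => i _.
rewrite (bigD1 (blk i)) //= big1 => [|j /negbTE]; last first.
  by rewrite !mxE eq_sym => ->; rewrite mulr0.
by rewrite !mxE eqxx addr0.
Qed.

Lemma sqnorm_part u : \sum_(j < m) sqnorm (bmask blk j u) = sqnorm u.
Proof.
rewrite -[RHS]dotp_part; apply: eq_bigr => j _.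
by rewrite /sqnorm -dotp_bmask bmaskK.
Qed.

End Blocks.

Section OperatorNorm.
Variables (R : realType) (d : nat).
Implicit Types (u w : 'rV[R]_d).

Definition hQ (Q : 'M[R]_d) u : 'rV[R]_d := (Q *m u^T)^T.

Lemma quadf_hQ (Q : 'M[R]_d) u : quadf Q u = dotp u (hQ Q u).
Proof.
rewrite /quadf -mulmxA mxE /dotp; apply: eq_bigr => i _.
by rewrite /hQ [in RHS]mxE.
Qed.

Lemma hQZ (Q : 'M[R]_d) (c : R) u : hQ Q (c *: u) = c *: hQ Q u.
Proof. by rewrite /hQ linearZ /= -scalemxAr linearZ. Qed.

Lemma hQ_coord (Q : 'M[R]_d) u i : hQ Q u ord0 i = dotp (row i Q) u.
Proof. by rewrite /hQ !mxE /dotp; apply: eq_bigr => j _; rewrite !mxE. Qed.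

(* The set whose supremum defines opnorm2 is bounded: for a unit vector u each
   coordinate of Q u is at most (|row_i Q|^2 + 1)/2 in absolute value. *)
Lemma opnorm_ub (Q : 'M[R]_d) :
  has_ubound [set r : R | exists u : 'rV[R]_d, sqnorm u = 1 /\ r = enorm (Q *m u^T)^T].
Proof.
pose B := \sum_i ((sqnorm (row i Q) + 1) / 2) ^+ 2.
exists (1 + B) => r [w [w1 ->]].
have hb : sqnorm (hQ Q w) <= B.
  rewrite /sqnorm /dotp /B; apply: ler_sum => i _; rewrite hQ_coord -expr2.
  have y1 := young (row i Q) w ltr01.
  have y2 := young (- row i Q) w ltr01.
  rewrite /sqnorm in w1 y1 y2 *.
  rewrite !dotpNl dotpNr opprK w1 in y2; rewrite w1 in y1.
  set c := dotp (row i Q) w in y1 y2 *.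
  set n := dotp (row i Q) (row i Q) in y1 y2 *.
  have n0 : 0 <= n by exact: sqnorm_ge0.
  nra.
have e0 : 0 <= enorm (hQ Q w) := sqrtr_ge0 _.
have e2 : enorm (hQ Q w) ^+ 2 = sqnorm (hQ Q w) by rewrite sqr_sqrtr ?sqnorm_ge0.
have B0 : 0 <= B by apply: sumr_ge0 => i _; rewrite sqr_ge0.
rewrite /hQ in e0 e2 hb.
nra.
Qed.

Lemma sqnorm_hQ_le (Q : 'M[R]_d) u :
  sqnorm (hQ Q u) <= opnorm2 Q ^+ 2 * sqnorm u.
Proof.
have [u0|un0] := eqVneq (sqnorm u) 0.
  by rewrite (sqnorm_eq0 u0) -(scale0r (0 : 'rV[R]_d)) hQZ !sqnormZ expr0n /=
    !mul0r mulr0.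
have u_gt0 : 0 < sqnorm u by rewrite lt_def un0 sqnorm_ge0.
set r := Num.sqrt (sqnorm u).
have r0 : 0 < r by rewrite sqrtr_gt0.
have r2 : r ^+ 2 = sqnorm u by rewrite sqr_sqrtr // ltW.
set w := r^-1 *: u.
have w1 : sqnorm w = 1 by rewrite sqnormZ exprVn r2 mulVf // gt_eqF.
have hw : enorm (hQ Q w) <= opnorm2 Q.
  apply: sup_upper_bound; last by exists w.
  by split; [exists (enorm (hQ Q w)), w | exact: opnorm_ub].
have e0 : 0 <= enorm (hQ Q w) := sqrtr_ge0 _.
have hw2 : sqnorm (hQ Q w) <= opnorm2 Q ^+ 2.
  rewrite -[sqnorm _]sqr_sqrtr ?sqnorm_ge0 // ler_sqr ?nnegrE //.
  exact: le_trans e0 hw.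
have Hu : u = r *: w by rewrite /w scalerA divff ?scale1r // gt_eqF.
by rewrite {1}Hu hQZ sqnormZ -r2 mulrC ler_wpM2r // sqr_ge0.
Qed.

(* The quadratic form of Q is bounded by |Q| |u|^2 (Cauchy-Schwarz via Young). *)
Lemma quadf_opnorm (Q : 'M[R]_d) u : 0 < opnorm2 Q ->
  quadf Q u <= opnorm2 Q * sqnorm u.
Proof.
move=> S0; have hS := sqnorm_hQ_le Q u; set S := opnorm2 Q in S0 hS *.
rewrite quadf_hQ dotpC; apply: le_trans (young (hQ Q u) u S0) _.
have -> : sqnorm (hQ Q u) / (2 * S) + S * sqnorm u / 2 =
  (sqnorm (hQ Q u) + S ^+ 2 * sqnorm u) / (2 * S) by field; rewrite gt_eqF.
rewrite ler_pdivrMr ?mulr_gt0 //.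
have u0 := sqnorm_ge0 u; nra.
Qed.

End OperatorNorm.

Section Integration.
Variable (R : realType).

(* Riemann-sum form of "phi(1) - phi(0) = int_0^1 psi": if psi(s) is a
   supergradient-type slope of phi at s and psi <= al + be s on [0,1], the
   increment of phi over [0, n/N] is at most the right Riemann sum. *)
Lemma riemann_sum_bound (phi psi : R -> R) (al be : R) (N : nat) :
  (0 < N)%N ->
  (forall t s, phi s - phi t <= (s - t) * psi s) ->
  (forall s, 0 <= s <= 1 -> psi s <= al + be * s) ->
  forall n, (n <= N)%N ->
  phi (n%:R / N%:R) - phi 0 <=
    n%:R / N%:R * al + be * (n%:R * (n%:R + 1)) / (2 * N%:R ^+ 2).
Proof.
move=> N0 slope bound; elim=> [|n IH] hn.
  by rewrite (_ : (0%N%:R : R) = 0) // !mul0r subrr mulr0 mul0r addr0.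
have Np : 0 < N%:R :> R by rewrite ltr0n.
have h1 := IH (ltnW hn).
have h2 := slope (n%:R / N%:R) (n.+1%:R / N%:R).
have h3 : psi (n.+1%:R / N%:R) <= al + be * (n.+1%:R / N%:R).
  by apply: bound; rewrite divr_ge0 ?ler0n //= ler_pdivrMr // mul1r ler_nat.
have e : n.+1%:R / N%:R - n%:R / N%:R = N%:R^-1 :> R.
  by rewrite -mulrBl -natrB // subSnn mul1r.
rewrite e in h2.
have h4 : N%:R^-1 * psi (n.+1%:R / N%:R) <= N%:R^-1 * (al + be * (n.+1%:R / N%:R)).
  by rewrite ler_pM2l // invr_gt0.
have -> : n.+1%:R / N%:R * al + be * (n.+1%:R * (n.+1%:R + 1)) / (2 * N%:R ^+ 2)
  = (n%:R / N%:R * al + be * (n%:R * (n%:R + 1)) / (2 * N%:R ^+ 2))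
    + N%:R^-1 * (al + be * (n.+1%:R / N%:R)).
  by rewrite -natr1; field; rewrite gt_eqF.
lra.
Qed.

(* Letting N -> oo: phi(1) - phi(0) <= int_0^1 (al + be s) ds = al + be/2. *)
Lemma increment_bound (phi psi : R -> R) (al be : R) :
  (forall t s, phi s - phi t <= (s - t) * psi s) ->
  (forall s, 0 <= s <= 1 -> psi s <= al + be * s) ->
  phi 1 - phi 0 <= al + be / 2.
Proof.
move=> slope bound.
have HN N : (0 < N)%N -> phi 1 - phi 0 <= al + be / 2 + be / (2 * N%:R).
  move=> N0; have := riemann_sum_bound N0 slope bound (leqnn N).
  have Np : 0 < N%:R :> R by rewrite ltr0n.
  rewrite divff ?gt_eqF // mul1r.
  have -> : be * (N%:R * (N%:R + 1)) / (2 * N%:R ^+ 2) = be / 2 + be / (2 * N%:R).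
    by field; rewrite gt_eqF.
  by rewrite addrA.
have [be0|be0] := lerP be 0.
  have := HN 1%N isT; rewrite mulr1.
  have : be / 2 <= 0 by rewrite pmulr_lle0 // invr_gt0 ltr0n.
  lra.
rewrite leNgt; apply/negP => HX.
set X := phi 1 - phi 0 - (al + be / 2).
have X0 : 0 < X by rewrite subr_gt0.
have B0 : 0 <= be / (2 * X) by rewrite divr_ge0 ?ltW // mulr_gt0.
set N := Num.Def.archi_bound (be / (2 * X)).
have hN := archi_boundP B0.
have N0 : (0 < N)%N by rewrite -(ltr0n R); apply: le_lt_trans hN.
have Np : 0 < N%:R :> R by rewrite ltr0n.
have : be / (2 * N%:R) < X.
  rewrite ltr_pdivrMr ?mulr_gt0 //.
  rewrite ltr_pdivrMr ?mulr_gt0 // in hN.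
  lra.
have := HN N N0; rewrite /X; lra.
Qed.

End Integration.

Section GradientInequality.
Local Open Scope classical_set_scope.
Variables (R : realType) (d : nat).

(* A differentiable convex function lies above its tangent planes: the
   difference quotients (f(a + h(b-a)) - f(a))/h, h in (0,1), are bounded by
   f(b) - f(a) and converge to <grad f(a), b - a>. *)
Lemma convex_gradient_ineq (f : 'rV[R]_d -> R) (gradf : 'rV[R]_d -> 'rV[R]_d) :
  convex_fun f ->
  (forall x1 : 'rV[R]_d, differentiable f x1 /\
     ('d f x1 : 'rV[R]_d -> R) = (fun h => dotp (gradf x1) h)) ->
  forall a b, f a + dotp (gradf a) (b - a) <= f b.
Proof.
move=> cvx Hd a b; set v := b - a.
have [dfa dfE] := Hd a.
have Dv : 'D_v f a = dotp (gradf a) v by rewrite deriveE // dfE.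
have C1 : (fun h : R => h^-1 *: ((f \o shift a) (h *: v) - f a)) @ 0^' --> 'D_v f a.
  exact: (diff_derivable dfa).
have sub : (0:R)^'+ `=>` (0:R)^'.
  by apply: within_subset => u /= hu; rewrite gt_eqF.
have C2 := cvg_trans (cvg_app _ sub) C1.
rewrite -lerBrDl -Dv -(cvg_lim _ C2) //.
apply: limr_le; first by apply/cvg_ex; eexists; exact: C2.
near=> h.
have h0 : 0 < h by near: h; exact: nbhs_right_gt.
have h1 : h < 1 by near: h; exact: nbhs_right_lt.
rewrite /=; have -> : h *: v + a = h *: b + (1 - h) *: a.
  by apply/rowP => i; rewrite !mxE; ring.
have := cvx b a h; rewrite (ltW h0) (ltW h1) => /(_ isT) H.
rewrite ler_pdivrMl //.
lra.
Unshelve. all: by end_near.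
Qed.

End GradientInequality.

Section Smoothness.
Variables (R : realType) (d m : nat) (blk : 'I_d -> 'I_m)
  (f : 'rV[R]_d -> R) (gradf : 'rV[R]_d -> 'rV[R]_d) (Q : 'I_m -> 'M[R]_d) (L : R).
Hypothesis cvx : convex_fun f.
Hypothesis Hd : forall x1 : 'rV[R]_d, differentiable f x1 /\
  ('d f x1 : 'rV[R]_d -> R) = (fun h => dotp (gradf x1) h).
Hypothesis Qpsd : forall j, psd (Q j).
Hypothesis Hlip : forall j x1 y1,
  sqnorm (bmask blk j (gradf x1 - gradf y1)) <= quadf (Q j) (x1 - y1).
Hypothesis L0 : 0 < L.
Hypothesis HL : L ^+ 2 = 2 * opnorm2 (Qtilde blk Q).

Lemma Qtilde_bound u : quadf (Qtilde blk Q) u <= L ^+ 2 / 2 * sqnorm u.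
Proof.
have S0 : 0 < opnorm2 (Qtilde blk Q).
  have : 0 < L ^+ 2 by rewrite exprn_gt0.
  by rewrite HL; lra.
rewrite HL mulrC (mulrC 2) mulfK ?pnatr_eq0 // mulrC.
exact: quadf_opnorm.
Qed.

(* Error of the cyclic gradient: the block-j part of grad f(x) - p, where p is
   evaluated at the point (x^(1..j), y^(j+1..m)), is controlled by the form of
   (Q^j)_{>=j+1} at x - y; summing over blocks gives Qtilde. *)
Lemma cyclic_gradient_error (x y : 'rV[R]_d) :
  sqnorm (gradf x - \row_i gradf (mixv blk (blk i) x y) ord0 i)
  <= L ^+ 2 / 2 * sqnorm (x - y).
Proof.
apply: le_trans (Qtilde_bound (x - y)); rewrite quadf_Qtilde -(sqnorm_part blk).
apply: ler_sum => j _.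
have -> : bmask blk j (gradf x - \row_i gradf (mixv blk (blk i) x y) ord0 i)
  = bmask blk j (gradf x - gradf (mixv blk j x y)).
  by apply/rowP => i; rewrite !mxE; case: eqP => // ->.
apply: le_trans (Hlip _ _ _) _.
have -> : x - mixv blk j x y = tmask blk j.+1 (x - y).
  by apply/rowP => i; rewrite !mxE; case: leqP => h; rewrite ?subrr.
by rewrite lerDr; case: (Qpsd j).
Qed.

Definition hybrid (x y : 'rV[R]_d) (n : nat) : 'rV[R]_d :=
  \row_i (if (blk i < n)%N then x ord0 i else y ord0 i).

(* Along the segment hybrid x y (j+1) + s D, D = block j of y - x, the
   slope <grad f, D> exceeds <grad f(x), D> by at most a Young bound of the
   block-j gradient change, which is convex in s by the block Lipschitz
   condition. *)
Lemma segment_slope_bound (x y : 'rV[R]_d) (j : 'I_m) (s eps : R) :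
  0 < eps -> 0 <= s <= 1 ->
  dotp (gradf (hybrid x y j.+1 + s *: bmask blk j (y - x))) (bmask blk j (y - x)) <=
    dotp (gradf x) (bmask blk j (y - x))
    + ((1 - s) * quadf (Q j) (tmask blk j.+1 (y - x))
       + s * quadf (Q j) (tmask blk j (y - x))) / (2 * eps)
    + eps * sqnorm (bmask blk j (y - x)) / 2.
Proof.
move=> eps0 s01; set D := bmask blk j (y - x); set P := hybrid x y j.+1 + s *: D.
have split_slope : dotp (gradf P) D =
    dotp (gradf x) D + dotp (bmask blk j (gradf P - gradf x)) D.
  by rewrite -dotp_bmask /D bmaskK dotpBl; ring.
have offset : P - x = (1 - s) *: tmask blk j.+1 (y - x) + s *: tmask blk j (y - x).
  apply/rowP => i; rewrite !mxE ltnS.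
  rewrite -[blk i == j]/(nat_of_ord (blk i) == nat_of_ord j).
  by case: (ltngtP (blk i) j) => h /=; ring.
have conv := quadf_convex (tmask blk j.+1 (y - x)) (tmask blk j (y - x)) (Qpsd j) s01.
rewrite -offset in conv.
have lip : sqnorm (bmask blk j (gradf P - gradf x)) / (2 * eps) <=
    ((1 - s) * quadf (Q j) (tmask blk j.+1 (y - x))
     + s * quadf (Q j) (tmask blk j (y - x))) / (2 * eps).
  by rewrite ler_pM2r ?invr_gt0 ?mulr_gt0 //; apply: le_trans conv.
have := young (bmask blk j (gradf P - gradf x)) D eps0.
rewrite split_slope; lra.
Qed.

(* One block of the path from y to x: integrating the slope bound over the
   segment gives the increment of f across block j. *)
Lemma hybrid_block_step (x y : 'rV[R]_d) (j : 'I_m) (eps : R) : 0 < eps ->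
  f (hybrid x y j) - f (hybrid x y j.+1) <=
    dotp (gradf x) (bmask blk j (y - x))
    + (quadf (Q j) (tmask blk j (y - x)) + quadf (Q j) (tmask blk j.+1 (y - x)))
      / (4 * eps)
    + eps * sqnorm (bmask blk j (y - x)) / 2.
Proof.
move=> eps0; set D := bmask blk j (y - x).
set q1 := quadf _ (tmask blk j _); set q2 := quadf _ (tmask blk j.+1 _).
pose P (t : R) := hybrid x y j.+1 + t *: D.
have P1 : P 1 = hybrid x y j.
  apply/rowP => i; rewrite !mxE mul1r ltnS.
  rewrite -[blk i == j]/(nat_of_ord (blk i) == nat_of_ord j).
  by case: (ltngtP (blk i) j) => h /=; rewrite ?addr0 // addrC subrK.
have P0 : P 0 = hybrid x y j.+1 by rewrite /P scale0r addr0.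
have slope t s : f (P s) - f (P t) <= (s - t) * dotp (gradf (P s)) D.
  have := convex_gradient_ineq cvx Hd (P s) (P t).
  have -> : P t - P s = (t - s) *: D.
    by rewrite /P opprD addrACA subrr add0r -scalerBl.
  by rewrite dotpZr; lra.
have bound s : 0 <= s <= 1 -> dotp (gradf (P s)) D <=
    (dotp (gradf x) D + q2 / (2 * eps) + eps * sqnorm D / 2) + (q1 - q2) / (2 * eps) * s.
  move=> s01; apply: le_trans (segment_slope_bound x y j eps0 s01) _.
  by rewrite -/q1 -/q2 le_eqVlt; apply/orP; left; apply/eqP; field; rewrite gt_eqF.
have := increment_bound slope bound; rewrite P1 P0.
have -> : dotp (gradf x) D + q2 / (2 * eps) + eps * sqnorm D / 2
    + (q1 - q2) / (2 * eps) / 2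
  = dotp (gradf x) D + (q1 + q2) / (4 * eps) + eps * sqnorm D / 2.
  by field; rewrite gt_eqF.
by [].
Qed.

(* Descent inequality: f is L-smooth.  Sum the block steps (Young parameter
   L/2) along the path from y to x and bound the forms by Qtilde. *)
Lemma descent_ineq (x y : 'rV[R]_d) :
  f y - f x - dotp (gradf x) (y - x) <= L / 2 * sqnorm (y - x).
Proof.
set del := y - x.
have eps0 : 0 < L / 2 by rewrite divr_gt0.
have telescope : f y - f x = \sum_(j < m) (f (hybrid x y j) - f (hybrid x y j.+1)).
  rewrite -(big_mkord xpredT (fun j => f (hybrid x y j) - f (hybrid x y j.+1))).
  rewrite (telescope_sumr_eq (fun k => - f (hybrid x y k))) //; last first.
    by move=> k _; rewrite opprK addrC.
  have -> : hybrid x y 0 = y by apply/rowP => i; rewrite !mxE.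
  have -> : hybrid x y m = x by apply/rowP => i; rewrite !mxE ltn_ord.
  by rewrite opprK addrC.
have steps := ler_sum (index_enum 'I_m) (P := fun _ => true)
  (fun j _ => hybrid_block_step x y j eps0).
rewrite -telescope !big_split /= -!mulr_suml -mulr_sumr -quadf_Qtilde in steps.
rewrite dotp_part sqnorm_part -/del in steps.
have Qb : quadf (Qtilde blk Q) del / (4 * (L / 2)) <= L / 4 * sqnorm del.
  rewrite ler_pdivrMr ?mulr_gt0 //.
  have -> : L / 4 * sqnorm del * (4 * (L / 2)) = L ^+ 2 / 2 * sqnorm del by field.
  exact: Qtilde_bound.
have := sqnorm_ge0 del; lra.
Qed.

End Smoothness.

Section ACoderStep.
Variables (R : realType) (d m : nat) (blk : 'I_d -> 'I_m)
  (f : 'rV[R]_d -> R) (gradf : 'rV[R]_d -> 'rV[R]_d) (Q : 'I_m -> 'M[R]_d)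
  (gamma L : R) (x v y p q : nat -> 'rV[R]_d) (a A : nat -> R).
Hypothesis cvx : convex_fun f.
Hypothesis Hd : forall x1 : 'rV[R]_d, differentiable f x1 /\
  ('d f x1 : 'rV[R]_d -> R) = (fun h => dotp (gradf x1) h).
Hypothesis gamma_ge0 : 0 <= gamma.
Hypothesis Qpsd : forall j, psd (Q j).
Hypothesis Hlip : forall j x1 y1,
  sqnorm (bmask blk j (gradf x1 - gradf y1)) <= quadf (Q j) (x1 - y1).
Hypothesis L0 : 0 < L.
Hypothesis HL : L ^+ 2 = 2 * opnorm2 (Qtilde blk Q).
Hypothesis a0 : a 0%N = 0.
Hypothesis A0 : A 0%N = 0.
Hypothesis HA : forall k, (1 <= k)%N -> A k = A k.-1 + a k.
Hypothesis Hstep : forall k, (1 <= k)%N ->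
  0 < a k /\ a k ^+ 2 / A k <= 2 * (1 + A k.-1 * gamma) / (5 * L).
Hypothesis Hx : forall k, (1 <= k)%N ->
  x k = (A k.-1 / A k) *: y k.-1 + (a k / A k) *: v k.-1.
Hypothesis Hp : forall k, (1 <= k)%N -> forall i,
  p k ord0 i = gradf (mixv blk (blk i) (x k) (y k)) ord0 i.
Hypothesis Hq : forall k, (1 <= k)%N -> forall i,
  q k ord0 i = p k ord0 i + a k.-1 / a k * (gradf (x k.-1) ord0 i - p k.-1 ord0 i).
Hypothesis Hy : forall k, (1 <= k)%N ->
  y k = (A k.-1 / A k) *: y k.-1 + (a k / A k) *: v k.

Local Notation c n := (1 + A n.-1 * gamma).
Local Notation sig n := (sqnorm (v n - v n.-1)).

Lemma A_ge0 n : 0 <= A n.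
Proof.
elim: n => [|n IH]; first by rewrite A0.
by rewrite HA // addr_ge0 // ltW // (Hstep (k := n.+1) isT).1.
Qed.

Lemma A_gt0 n : (1 <= n)%N -> 0 < A n.
Proof. by move=> n1; rewrite HA // ltr_pwDr ?A_ge0 // (Hstep n1).1. Qed.

Lemma c_ge1 n : 1 <= c n.
Proof. by rewrite lerDl mulr_ge0 ?A_ge0. Qed.

Lemma A_monotone n : A n.-1 <= A n.
Proof.
case: n => [|n] //=.
by rewrite (HA (k := n.+1)) //= lerDl ltW // (Hstep (k := n.+1) isT).1.
Qed.

Lemma c_monotone n : c n.-1 <= c n.
Proof. by rewrite lerD2l ler_wpM2r // A_monotone. Qed.

Lemma y_sub_x n : (1 <= n)%N -> y n - x n = (a n / A n) *: (v n - v n.-1).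
Proof. by move=> n1; rewrite Hy // Hx //; apply/rowP => i; rewrite !mxE; ring. Qed.

Lemma coupling n : (1 <= n)%N -> A n.-1 *: (y n.-1 - x n) = a n *: (x n - v n.-1).
Proof.
move=> n1; have An := A_gt0 n1; rewrite (HA n1) in An.
rewrite Hx // (HA n1); apply/rowP => i; rewrite !mxE /=.
by field; rewrite gt_eqF.
Qed.

Lemma extrapolation n : (1 <= n)%N ->
  a n *: q n = a n *: p n + a n.-1 *: (gradf (x n.-1) - p n.-1).
Proof.
move=> n1; have an := (Hstep n1).1.
apply/rowP => i; rewrite !mxE Hq //= mulrDr; congr (_ + _).
by rewrite mulrA mulrCA divff ?gt_eqF // mulr1.
Qed.

Lemma step_rule n : (1 <= n)%N -> L * (a n ^+ 2 / A n) <= 2 * c n / 5.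
Proof.
move=> n1; rewrite mulrC -ler_pdivlMr //.
by apply: le_trans (Hstep n1).2 _; rewrite invfM mulrA.
Qed.

Lemma lagged_error n :
  sqnorm (a n *: (gradf (x n) - p n)) <= 2 * c n ^+ 2 / 25 * sig n.
Proof.
have sig0 := sqnorm_ge0 (v n - v n.-1).
case: n sig0 => [|n] sig0.
  by rewrite a0 sqnormZ expr0n /= mul0r mulr_ge0 // divr_ge0 // mulr_ge0 // sqr_ge0.
have An := A_gt0 (isT : (1 <= n.+1)%N).
have err := cyclic_gradient_error Qpsd Hlip L0 HL (x n.+1) (y n.+1).
have Ep : \row_i gradf (mixv blk (blk i) (x n.+1) (y n.+1)) ord0 i = p n.+1.
  by apply/rowP => i; rewrite mxE Hp.
have Exy : x n.+1 - y n.+1 = - ((a n.+1 / A n.+1) *: (v n.+1 - v n)).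
  by rewrite -y_sub_x // opprB.
rewrite Ep Exy sqnormN sqnormZ in err; rewrite sqnormZ.
set r := a n.+1 ^+ 2 / A n.+1.
have r0 : 0 <= r by rewrite divr_ge0 ?sqr_ge0 ?ltW.
have Lr := step_rule (isT : (1 <= n.+1)%N); rewrite -/r in Lr.
have -> : 2 * c n.+1 ^+ 2 / 25 * sig n.+1 = (2 * c n.+1 / 5) ^+ 2 / 2 * sig n.+1.
  by field.
have Lr0 : 0 <= L * r by rewrite mulr_ge0 // ltW.
have Lr2 : (L * r) ^+ 2 <= (2 * c n.+1 / 5) ^+ 2.
  by rewrite ler_sqr ?nnegrE // (le_trans Lr0 Lr).
apply: le_trans (_ : (L * r) ^+ 2 / 2 * sig n.+1 <= _); last first.
  by rewrite ler_wpM2r // ler_wpM2r.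
apply: le_trans
  (_ : a n.+1 ^+ 2 * (L ^+ 2 / 2 * ((a n.+1 / A n.+1) ^+ 2 * sig n.+1)) <= _).
  by rewrite ler_wpM2l ?sqr_ge0.
by rewrite /r le_eqVlt; apply/orP; left; apply/eqP; field; rewrite gt_eqF.
Qed.

(* Convexity of f at x_k through the coupling identity. *)
Lemma convexity_term k : (1 <= k)%N ->
  a k * dotp (gradf (x k)) (x k - v k.-1) <= A k.-1 * (f (y k.-1) - f (x k)).
Proof.
move=> k1; have tangent := convex_gradient_ineq cvx Hd (x k) (y k.-1).
rewrite -dotpZr -coupling // dotpZr ler_wpM2l ?A_ge0 //; lra.
Qed.

(* Descent inequality at (x_k, y_k) with the step-size rule. *)
Lemma descent_term k : (1 <= k)%N ->
  A k * (f (y k) - f (x k)) <= a k * dotp (gradf (x k)) (v k - v k.-1) + c k / 5 * sig k.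
Proof.
move=> k1; have Ak := A_gt0 k1; have Lr := step_rule k1.
have sig0 := sqnorm_ge0 (v k - v k.-1).
have desc := descent_ineq cvx Hd Qpsd Hlip L0 HL (x k) (y k).
rewrite y_sub_x // dotpZr sqnormZ in desc.
set g := dotp (gradf (x k)) (v k - v k.-1) in desc *.
apply: le_trans (_ : A k * (a k / A k * g + L / 2 * ((a k / A k) ^+ 2 * sig k)) <= _).
  by rewrite ler_pM2l //; lra.
have -> : A k * (a k / A k * g + L / 2 * ((a k / A k) ^+ 2 * sig k))
    = a k * g + L * (a k ^+ 2 / A k) / 2 * sig k.
  by field; rewrite gt_eqF.
rewrite lerD2l ler_wpM2r //; lra.
Qed.

(* Young's inequality on the extrapolation error, with the lagged bound. *)
Lemma extrapolation_term k : (1 <= k)%N ->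
  - (a k.-1 * dotp (gradf (x k.-1) - p k.-1) (v k - v k.-1))
  <= c k.-1 / 10 * sig k.-1 + c k / 5 * sig k.
Proof.
move=> k1; have c0 : 0 < c k.-1 := lt_le_trans ltr01 (c_ge1 k.-1).
have cc := c_monotone k.
have s0 : 0 < 2 * c k.-1 / 5 by rewrite divr_gt0 // mulr_gt0.
have Y := young (a k.-1 *: (gradf (x k.-1) - p k.-1)) (- (v k - v k.-1)) s0.
rewrite dotpZl dotpNr sqnormN mulrN in Y; apply: le_trans Y _.
have lag : sqnorm (a k.-1 *: (gradf (x k.-1) - p k.-1)) / (2 * (2 * c k.-1 / 5))
    <= c k.-1 / 10 * sig k.-1.
  rewrite ler_pdivrMr ?mulr_gt0 //.
  have -> : c k.-1 / 10 * sig k.-1 * (2 * (2 * c k.-1 / 5)) =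
    2 * c k.-1 ^+ 2 / 25 * sig k.-1 by field.
  exact: lagged_error.
have sig0 := sqnorm_ge0 (v k - v k.-1); nra.
Qed.

(* The one-step inequality: a linear combination of the three terms above,
   after splitting a_k q_k by the extrapolation identity. *)
Lemma one_step k u : (1 <= k)%N ->
    A k * (f (y k) - f (x k)) - A k.-1 * (f (y k.-1) - f (x k))
    - a k * dotp (q k) (v k - x k) + a k * dotp (gradf (x k) - q k) (x k - u)
    - c k / 2 * sig k
    <=
    a k * dotp (gradf (x k) - p k) (v k - u)
    - a k.-1 * dotp (gradf (x k.-1) - p k.-1) (v k.-1 - u)
    - c k / 10 * sig k + c k.-1 / 10 * sig k.-1.
Proof.
move=> k1.
have conv := convexity_term k1; have desc := descent_term k1.
have extr := extrapolation_term k1.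
have aq w : a k * dotp (q k) w =
    a k * dotp (p k) w + a k.-1 * dotp (gradf (x k.-1) - p k.-1) w.
  by rewrite -!dotpZl -dotpDl extrapolation.
have aqv := aq (v k); have aqx := aq (x k); have aqu := aq u.
rewrite !dotpBl !dotpBr in conv desc extr aqv aqx aqu *.
lra.
Qed.

End ACoderStep.

Unset Implicit Arguments.
Set Strict Implicit.

(* Lemma 3 of the paper. *)
Theorem lemma3 (R : realType) (d m : nat) (blk : 'I_d -> 'I_m)
  (f : 'rV[R]_d -> R) (gradf : 'rV[R]_d -> 'rV[R]_d)
  (g : 'rV[R]_d -> \bar R) (gj : 'I_m -> 'rV[R]_d -> \bar R)
  (Q : 'I_m -> 'M[R]_d) (gamma L : R) (x0 : 'rV[R]_d)
  (x v y p q z : nat -> 'rV[R]_d) (a A : nat -> R) :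
  (* blocks *)
  consecutive_blocks blk ->
  (* f convex, continuously differentiable with gradient gradf *)
  convex_fun f ->
  (forall x1 : 'rV[R]_d, differentiable f x1 /\
     ('d f x1 : 'rV[R]_d -> R) = (fun h => dotp (gradf x1) h)) ->
  continuous gradf ->
  (* g proper, lsc, gamma-strongly convex, block separable *)
  0 <= gamma ->
  proper_fun g -> lower_semicontinuous g -> strongly_convex gamma g ->
  (forall j, depends_only_on_block blk j (gj j)) ->
  (forall x1, g x1 = (\sum_(j < m) gj j x1)%E) ->
  (* block Lipschitz *)
  (forall j, psd (Q j)) ->
  (forall j x1 y1, sqnorm (bmask blk j (gradf x1 - gradf y1)) <= quadf (Q j) (x1 - y1)) ->
  0 < L -> L ^+ 2 = 2 * opnorm2 (Qtilde blk Q) ->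
  (* initialization *)
  (g x0 < +oo)%E ->
  x 0%N = x0 -> v 0%N = x0 -> y 0%N = x0 -> p 0%N = gradf x0 -> z 0%N = 0 ->
  a 0%N = 0 -> A 0%N = 0 ->
  (* iterations k >= 1 *)
  (forall k, (1 <= k)%N -> A k = A k.-1 + a k) ->
  (forall k, (1 <= k)%N ->
     [/\ 0 < a k, a k ^+ 2 / A k <= 2 * (1 + A k.-1 * gamma) / (5 * L)
       & forall b, 0 < b -> b ^+ 2 / (A k.-1 + b) <= 2 * (1 + A k.-1 * gamma) / (5 * L) ->
           b <= a k]) ->
  (forall k, (1 <= k)%N -> x k = (A k.-1 / A k) *: y k.-1 + (a k / A k) *: v k.-1) ->
  (forall k, (1 <= k)%N -> forall i,
     p k ord0 i = gradf (mixv blk (blk i) (x k) (y k)) ord0 i) ->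
  (forall k, (1 <= k)%N -> forall i,
     q k ord0 i = p k ord0 i + a k.-1 / a k * (gradf (x k.-1) ord0 i - p k.-1 ord0 i)) ->
  (forall k, (1 <= k)%N -> z k = z k.-1 + a k *: q k) ->
  (forall k, (1 <= k)%N -> forall (j : 'I_m) (w : 'rV[R]_d),
     ((A k)%:E * gj j (v k) + (sqnorm (bmask blk j (v k - (x0 - z k))) / 2)%:E <=
      (A k)%:E * gj j w + (sqnorm (bmask blk j (w - (x0 - z k))) / 2)%:E)%E) ->
  (forall k, (1 <= k)%N -> y k = (A k.-1 / A k) *: y k.-1 + (a k / A k) *: v k) ->
  forall (k : nat) (u : 'rV[R]_d), (1 <= k)%N ->
    A k * (f (y k) - f (x k)) - A k.-1 * (f (y k.-1) - f (x k))
    - a k * dotp (q k) (v k - x k) + a k * dotp (gradf (x k) - q k) (x k - u)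
    - (1 + A k.-1 * gamma) / 2 * sqnorm (v k - v k.-1)
    <=
    a k * dotp (gradf (x k) - p k) (v k - u)
    - a k.-1 * dotp (gradf (x k.-1) - p k.-1) (v k.-1 - u)
    - (1 + A k.-1 * gamma) / 10 * sqnorm (v k - v k.-1)
    + (1 + A k.-2 * gamma) / 10 * sqnorm (v k.-1 - v k.-2).
Proof.
move=> _ cvx Hd _ gamma_ge0 _ _ _ _ _ Qpsd Hlip L0 HL _ _ _ _ _ _ a0 A0
  HA Hstep Hx Hp Hq _ _ Hy k u k1.
have step n : (1 <= n)%N ->
    0 < a n /\ a n ^+ 2 / A n <= 2 * (1 + A n.-1 * gamma) / (5 * L).
  by move=> /Hstep[].
exact: (one_step cvx Hd gamma_ge0 Qpsd Hlip L0 HL a0 A0 HA step Hx Hp Hq Hy u k1).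
Qed.
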